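(* Let $\widehat M$ be a cooperative Markov game with MMDP $M$, $(S_{target},S_{avoid})$ a reach-avoid objective, and $(\pi_{comm},\pi_{act})\in\Pi^{pos}_{comm}(\mathcal O,K)\times\Pi^{pos}_{act}(M)$, and assume all occupancy measures $\nu_{s,a}$ ($s\notin\mathcal T$) of the full-communication process are finite. Then for every agent $i\in[N]$ and every $c\in\mathcal A_{comm}$, $$G^i\le\bar G^i\quad\text{and}\quad G^c\le\bar G^c,$$ where $\bar G^i=-\sum_{o,l^i,a^i}\nu_{o,l^i,a^i}\,w'(o,i)\log\frac{\nu_{o,l^i,a^i}}{\sum_{b^i\in\mathcal A^i}\nu_{o,l^i,b^i}}-\sum_{o,l^i,a^i,o^i_1,l^i_1}\nu_{o,l^i,a^i}\,w'(o,i)\,P^i((o^i,l^i),a^i)((o^i_1,l^i_1))\log P^i((o^i,l^i),a^i)((o^i_1,l^i_1))$, $\bar G^c=-\sum_{o,l^c,a^c}\nu_{o,l^c,a^c}\,w''(o,c)\log\frac{\nu_{o,l^c,a^c}}{\sum_{b^c\in\mathcal A^c}\nu_{o,l^c,b^c}}-\sum_{o,l^c,a^c,o^c_1,l^c_1}\nu_{o,l^c,a^c}\,w''(o,c)\,P^c((o^c,l^c),a^c)((o^c_1,l^c_1))\log P^c((o^c,l^c),a^c)((o^c_1,l^c_1))$.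
   Context: MMDP: there are $N\ge1$ agents, identified with $[N]=\{1,\dots,N\}$. Agent $i$ has a finite local state set $\mathcal S^i$, finite local action set $\mathcal A^i$, local transition function $P^i:\mathcal S^i\times\mathcal A^i\to\Delta(\mathcal S^i)$ and initial local state $s^i_{init}$. Joint states $\mathcal S=\prod_i\mathcal S^i$, joint actions $\mathcal A=\prod_i\mathcal A^i$, joint transitions $P(s,a)(u)=\prod_{i}P^i(s^i,a^i)(u^i)$, initial state $s_{init}=(s^1_{init},\dots,s^N_{init})$. A positional joint action policy is a map $\pi_{act}:\mathcal S\to\Delta(\mathcal A)$; $\Pi^{pos}_{act}(M)$ is the set of these. Cooperative Markov game $\widehat M=(M,\mathcal O^1,\dots,\mathcal O^N,\mathcal L^1,\dots,\mathcal L^N,K)$: each $\mathcal S^i=\mathcal O^i\times\mathcal L^i$ (public part $o^i$, local part $l^i$); $\mathcal O=\prod_i\mathcal O^i$, $\mathcal L=\prod_i\mathcal L^i$, and a joint state is written $s=(o,l)$. For $c\subseteq[N]$, $\mathcal O^c=\prod_{j\in c}\mathcal O^j$, $\mathcal L^c=\prod_{j\in c}\mathcal L^j$, $\mathcal A^c=\prod_{j\in c}\mathcal A^j$, $o^c,l^c,a^c$ denote restrictions to coordinates in $c$, and $P^c((o^c,l^c),a^c)((o^c_1,l^c_1))=\prod_{j\in c}P^j((o^j,l^j),a^j)((o^j_1,l^j_1))$. $K\in\{0,\dots,N\}$ and $\mathcal A_{comm}$ is the set of subsets of $[N]$ of size $K$ (so $\mathcal A_{comm}=\{\emptyset\}$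 if $K=0$). A positional communication policy is a map $\pi_{comm}:\mathcal O\to\Delta(\mathcal A_{comm})$; $\Pi^{pos}_{comm}(\mathcal O,K)$ is the set of these. Reach-avoid objective: disjoint sets $S_{target},S_{avoid}\subseteq\mathcal S$; put $\mathcal T=S_{target}\cup S_{avoid}$. Full-communication process $M_{\pi_{act}}$: random sequence $S_0=s_{init},A_1,S_1,A_2,S_2,\dots$ with $\mathbb P(A_t=a,S_t=s'\mid S_0,A_1,\dots,S_{t-1}=s)=\pi_{act}(s)(a)P(s,a)(s')$. Write $S_t=(O_t,L_t)$ and $A^c_t,O^c_t,L^c_t$ (resp. $A^i_t,O^i_t,L^i_t$) for components in $c$ (resp. $i$). The process is regarded as stopped upon entering $\mathcal T$: with $E_{t}=\{S_0,\dots,S_{t}\notin\mathcal T\}$, every probability of an event concerning times $t-1,t$ is the probability of that event intersected with $E_{t-1}$, and conditional probabilities condition on the conditioning event intersected with $E_{t-1}$. For $c\subseteq[N]$ and $t\ge1$ let $q^c_t(a^c,o^c_1,l^c_1\mid o,l^c)=\mathbb P(A^c_t=a^c,O^c_t=o^c_1,L^c_t=l^c_1\mid O_{t-1}=o,L^c_{t-1}=l^c,E_{t-1})$ (write $q^i_t$ for $c=\{i\}$). Weights: $w'(o,i)=\sum_{c\in\mathcal A_{comm},\,i\notin c}\pi_{comm}(o)(c)$ and $w''(o,c)=\pi_{comm}(o)(c)$. $G^i=\sum_{t\ge1}\sum_{o\in\mathcal O,l^i\in\mathcal L^i}w'(o,i)\,\mathbb P(O_{t-1}=o,L^i_{t-1}=l^i,E_{t-1})\Big(-\sum_{a^i,o^i_1,l^i_1}q^i_t\log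 q^i_t\Big)$ with $q^i_t=q^i_t(a^i,o^i_1,l^i_1\mid o,l^i)$; $G^c=\sum_{t\ge1}\sum_{o\in\mathcal O,l^c\in\mathcal L^c}w''(o,c)\,\mathbb P(O_{t-1}=o,L^c_{t-1}=l^c,E_{t-1})\Big(-\sum_{a^c,o^c_1,l^c_1}q^c_t\log q^c_t\Big)$. Occupancy measures: $\nu_{s,a}=\sum_{t\ge1}\mathbb P(S_{t-1}=s,A_t=a,E_{t-1})$ for $s\notin\mathcal T$; marginals $\nu_{o,l^c,a^c}=\sum\nu_{(o,l),a}$ over all $l\in\mathcal L$ with restriction $l^c$ and $(o,l)\notin\mathcal T$, and all $a\in\mathcal A$ with restriction $a^c$ ($\nu_{o,l^i,a^i}$ for $c=\{i\}$). Conventions: $0\log0=0$; summands with $\nu=0$ are $0$. *)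

From HB Require Import structures.
From mathcomp Require Import all_boot all_order all_algebra.
From mathcomp Require Import all_classical all_reals all_analysis.
Set Implicit Arguments.
Unset Strict Implicit.
Unset Printing Implicit Defensive.
Import Order.TTheory GRing.Theory Num.Theory.
Local Open Scope ring_scope.

Section MMDP.
Variable R : realType.
Variable N : nat.
(* agent i : public local states O i, private local states L i, actions A i *)
Variables (O L A : 'I_N -> finType).

Definition jO := {dffun forall i : 'I_N, O i}.
Definition jL := {dffun forall i : 'I_N, L i}.
Definition jA := {dffun forall i : 'I_N, A i}.
Definition jS := (jO * jL)%type.

Variable P : forall i : 'I_N, (O i * L i)%type -> A i -> (O i * L i)%type -> R.

Definition Pj (s : jS) (a : jA) (s' : jS) : R :=
  \prod_(i : 'I_N) P (s.1 i, s.2 i) (a i) (s'.1 i, s'.2 i).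

Variable sinit : jS.
Variable pi_act : jS -> jA -> R.
(* T = S_target :|: S_avoid *)
Variable T : {set jS}.

(* mu k s = P(S_k = s, E_{k-1})  (with E_{-1} the sure event):
   marginal law of the full-communication process stopped on T *)
Fixpoint mu (k : nat) (s' : jS) : R :=
  match k with
  | 0 => (s' == sinit)%:R
  | k.+1 => \sum_(s : jS | s \notin T) \sum_(a : jA) mu k s * pi_act s a * Pj s a s'
  end.

(* step k s a s' = P(S_k = s, A_{k+1} = a, S_{k+1} = s', E_k) *)
Definition step (k : nat) (s : jS) (a : jA) (s' : jS) : R :=
  (s \notin T)%:R * mu k s * pi_act s a * Pj s a s'.

(* occupancy measure nu_{s,a} = sum_{t>=1} P(S_{t-1}=s, A_t=a, E_{t-1}) *)
Definition occ (s : jS) (a : jA) : \bar R :=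
  (\sum_(k <oo) ((s \notin T)%:R * mu k s * pi_act s a)%:E)%E.

Definition occr (s : jS) (a : jA) : R := fine (occ s a).

Section Generic.
(* X : conditioning information at time t-1 (o, l^c);
   Y : information at time t (a^c, o^c_1, l^c_1);
   f, g : the corresponding projections;  w : weight *)
Variables (X Y : finType) (f : jS -> X) (g : jA -> jS -> Y) (w : X -> R).

(* probX k x = P(X_{t-1} = x, E_{t-1}) with t = k+1 *)
Definition probX (k : nat) (x : X) : R :=
  \sum_(s : jS | (s \notin T) && (f s == x)) mu k s.

Definition probXY (k : nat) (x : X) (y : Y) : R :=
  \sum_(s : jS) \sum_(a : jA) \sum_(s' : jS)
     (f s == x)%:R * (g a s' == y)%:R * step k s a s'.

Definition qcond (k : nat) (x : X) (y : Y) : R := probXY k x y / probX k x.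

Definition Hcond (k : nat) (x : X) : R :=
  - \sum_(y : Y) qcond k x y * ln (qcond k x y).

Definition Gent : \bar R :=
  (\sum_(k <oo) (\sum_(x : X) w x * probX k x * Hcond k x)%:E)%E.

Variables (Ac Y' : finType) (h : jA -> Ac) (PX : X -> Ac -> Y' -> R).

Definition numarg (x : X) (ac : Ac) : R :=
  \sum_(s : jS | (s \notin T) && (f s == x)) \sum_(a : jA | h a == ac) occr s a.

Definition Gbar : R :=
  - (\sum_(x : X) \sum_(ac : Ac)
        numarg x ac * w x * ln (numarg x ac / \sum_(b : Ac) numarg x b))
  - (\sum_(x : X) \sum_(ac : Ac) \sum_(y : Y')
        numarg x ac * w x * PX x ac y * ln (PX x ac y)).
End Generic.

Variable K : nat.
Variable pi_comm : jO -> {set 'I_N} -> R.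

Definition wprime (o : jO) (i : 'I_N) : R :=
  \sum_(c : {set 'I_N} | (#|c| == K) && (i \notin c)) pi_comm o c.

Definition fi (i : 'I_N) (s : jS) : (jO * L i)%type := (s.1, s.2 i).
Definition gi (i : 'I_N) (a : jA) (s' : jS) : (A i * (O i * L i))%type :=
  (a i, (s'.1 i, s'.2 i)).
Definition hi (i : 'I_N) (a : jA) : A i := a i.
Definition PXi (i : 'I_N) (x : (jO * L i)%type) (ai : A i) (y : (O i * L i)%type) : R :=
  P (x.1 i, x.2) ai y.

Definition G_agent (i : 'I_N) : \bar R :=
  Gent (fi i) (@gi i) (fun x : (jO * L i)%type => wprime x.1 i).
Definition Gbar_agent (i : 'I_N) : R :=
  Gbar (fi i) (fun x : (jO * L i)%type => wprime x.1 i) (@hi i) (@PXi i).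

Definition cidx (c : {set 'I_N}) := {j : 'I_N | j \in c}.
Definition Oc (c : {set 'I_N}) := {dffun forall j : cidx c, O (val j)}.
Definition Lc (c : {set 'I_N}) := {dffun forall j : cidx c, L (val j)}.
Definition Ac_ (c : {set 'I_N}) := {dffun forall j : cidx c, A (val j)}.

Definition fc (c : {set 'I_N}) (s : jS) : (jO * Lc c)%type :=
  (s.1, [ffun j : cidx c => s.2 (val j)]).
Definition gc (c : {set 'I_N}) (a : jA) (s' : jS) : (Ac_ c * (Oc c * Lc c))%type :=
  ([ffun j : cidx c => a (val j)],
   ([ffun j : cidx c => s'.1 (val j)], [ffun j : cidx c => s'.2 (val j)])).
Definition hc (c : {set 'I_N}) (a : jA) : Ac_ c := [ffun j : cidx c => a (val j)].
Definition PXc (c : {set 'I_N}) (x : (jO * Lc c)%type) (ac : Ac_ c)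
    (y : (Oc c * Lc c)%type) : R :=
  \prod_(j : cidx c) P (x.1 (val j), x.2 j) (ac j) (y.1 j, y.2 j).

Definition G_coal (c : {set 'I_N}) : \bar R :=
  Gent (fc c) (@gc c) (fun x : (jO * Lc c)%type => pi_comm x.1 c).
Definition Gbar_coal (c : {set 'I_N}) : R :=
  Gbar (fc c) (fun x : (jO * Lc c)%type => pi_comm x.1 c) (@hc c) (@PXc c).

End MMDP.

From HB Require Import structures.
From mathcomp Require Import all_boot all_order all_algebra.
From mathcomp Require Import all_classical all_reals all_analysis.
From mathcomp Require Import ring lra.
Import Order.TTheory GRing.Theory Num.Theory.
Local Open Scope ring_scope.

(** By the chain rule, at each time [t] and each value [x] of the conditioning
    variable, the conditional entropy of [(A^c_t, O^c_t, L^c_t)] splits into the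
    entropy of the restricted action [A^c_t] and the expected entropy of the local
    kernel [P^c]: since [P] is a product of local kernels, the next local state
    depends on the past only through [(x, a^c)].  Summed over [t], the kernel part
    is at most the occupancy measure times the kernel entropy, and the action part
    is bounded by the log-sum inequality applied to the partial sums of the
    occupancy measure, the mass not yet collected serving as a remainder. *)

Lemma bigA_distr_dffun {R : comPzSemiRingType} {I : finType} {T_ : I -> finType}
    (F : forall i, T_ i -> R) :
  \prod_(i : I) \sum_(x : T_ i) F i x =
  \sum_(f : {dffun forall i, T_ i}) \prod_(i : I) F i (f i).
Proof.
pose F_ i := [ffun x : T_ i => F i x].
transitivity (\prod_(i : I) \sum_(j in tagged_with T_ i) untag 0 (F_ i) j).
  apply: eq_bigr => i _; rewrite -(big_tag (op := +%R) (fun i => F_ i) i).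
  by apply: eq_bigr => x _; rewrite ffunE.
rewrite bigA_distr_big_dep -(big_fprod 1 +%R).
rewrite (reindex (@fprod_of_dffun I T_)); last exact/onW_bij/fprod_of_dffun_bij.
by apply: eq_bigr => f _; apply: eq_bigr => i _; rewrite fprodE ffunE.
Qed.

Lemma bigA_distr_dffun_pair {R : comPzSemiRingType} {I : finType}
    {T1 T2 : I -> finType} (F : forall i, (T1 i * T2 i)%type -> R) :
  \sum_(p : ({dffun forall i, T1 i} * {dffun forall i, T2 i})%type)
     \prod_i F i (p.1 i, p.2 i) = \prod_i \sum_z F i z.
Proof.
transitivity (\sum_(u : {dffun forall i, T1 i}) \sum_(v : {dffun forall i, T2 i})
                \prod_i F i (u i, v i)).
  by rewrite pair_big; apply: eq_bigr => -[].
transitivity (\prod_i \sum_(x : T1 i) \sum_(y : T2 i) F i (x, y)); last first.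
  by apply: eq_bigr => i _; rewrite pair_big; apply: eq_bigr => -[].
rewrite bigA_distr_dffun; apply: eq_bigr => u _.
by rewrite bigA_distr_dffun.
Qed.

Lemma prodr_natr_forall {R : comPzSemiRingType} {I : finType} (b : pred I) :
  \prod_i ((b i)%:R : R) = ([forall i, b i])%:R.
Proof.
have [/forallP bT|/forallPn[i /negbTE bi]] := boolP [forall i, b i].
  by apply: big1 => i _; rewrite bT.
by rewrite (bigD1 i) //= bi mul0r.
Qed.

Section LogInequalities.
Variable R : realType.
Implicit Types a b m p q v : R.

Lemma ler_sum_term (I : finType) (F : I -> R) (i : I) :
  (forall j, 0 <= F j) -> F i <= \sum_j F j.
Proof. by move=> F0; rewrite (bigD1 i) //= lerDl sumr_ge0. Qed.

Lemma ln_le_subr1 {y : R} : 0 < y -> ln y <= y - 1.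
Proof. by move=> y0; have := @le_ln1Dx R (y - 1); rewrite addrCA subrr addr0; apply; lra. Qed.

(* [ln] lies below its tangent at [1], evaluated at [b * m / a]. *)
Lemma mul_ln_div_ge a b m : 0 <= a <= b -> 0 < m ->
  a * ln m + a - b * m <= a * ln (a / b).
Proof.
case/andP=> a0 ab m0; have [->|an0] := eqVneq a 0.
  by rewrite !mul0r !add0r oppr_le0 mulr_ge0 ?(le_trans a0 ab) ?ltW.
have ap : 0 < a by rewrite lt_def an0.
have bp : 0 < b by apply: lt_le_trans ab.
have y0 : 0 < b * m / a by rewrite divr_gt0 ?mulr_gt0.
have lnyE : ln (b * m / a) = ln m - ln (a / b).
  by rewrite !ln_div ?lnM ?posrE ?mulr_gt0 //; ring.
have ayE : a * (b * m / a - 1) = b * m - a by field; rewrite gt_eqF.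
have := ler_wpM2l (ltW ap) (ln_le_subr1 y0).
by rewrite lnyE ayE; lra.
Qed.

Lemma log_sum_le (I : finType) (q p : I -> R) :
  (forall i, 0 <= q i <= p i) ->
  (\sum_i q i) * ln ((\sum_i q i) / \sum_i p i) <= \sum_i q i * ln (q i / p i).
Proof.
move=> qp; set U := \sum_i q i; set V := \sum_i p i.
have q0 i : 0 <= q i by case/andP: (qp i).
have [U0|Un0] := eqVneq U 0.
  rewrite U0 mul0r; have /psumr_eq0P q_eq0 := U0.
  by rewrite big1 // => i _; rewrite q_eq0 ?mul0r.
have Up : 0 < U by rewrite lt_def Un0 sumr_ge0.
have Vp : 0 < V by apply: lt_le_trans Up _; apply: ler_sum => i _; case/andP: (qp i).
have tangent : \sum_i (q i * ln (U / V) + q i - p i * (U / V))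
                 <= \sum_i q i * ln (q i / p i).
  by apply: ler_sum => i _; exact: mul_ln_div_ge (qp i) (divr_gt0 Up Vp).
rewrite !big_split /= sumrN -!mulr_suml -/U -/V in tangent.
have VUV : V * (U / V) = U by rewrite mulrCA divff ?mulr1 // gt_eqF.
by rewrite VUV addrK in tangent.
Qed.

Lemma log_sum_le_rem n (q p : nat -> R) (r r' : R) :
  (forall k, 0 <= q k <= p k) -> 0 <= r <= r' ->
  (\sum_(k < n) q k + r) * ln ((\sum_(k < n) q k + r) / (\sum_(k < n) p k + r'))
  <= \sum_(k < n) q k * ln (q k / p k).
Proof.
move=> qp /andP[r0 rr'].
pose ext (u : nat -> R) u' (k : 'I_n.+1) := if (k < n)%N then u (k : nat) else u'.
have sum_ext (G : R -> R -> R) :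
    \sum_k G (ext q r k) (ext p r' k) = \sum_(k < n) G (q k) (p k) + G r r'.
  by rewrite big_ord_recr /ext /= ltnn; congr (_ + _); apply: eq_bigr => k _; rewrite ltn_ord.
have rem_le0 : r * ln (r / r') <= 0.
  apply: mulr_ge0_le0 => //; apply: ln_le0.
  have [->|r'n0] := eqVneq r' 0; first by rewrite invr0 mulr0 ler01.
  by rewrite ler_pdivrMr ?mul1r // lt_def r'n0 (le_trans r0).
have ext_le k : 0 <= ext q r k <= ext p r' k by rewrite /ext; case: ifP; rewrite ?qp ?r0 ?rr'.
have := @log_sum_le _ _ _ ext_le.
rewrite (sum_ext (fun a _ => a)) (sum_ext (fun _ b => b)).
rewrite (sum_ext (fun a b => a * ln (a / b))) /=.
lra.
Qed.

Lemma mul_ln_chain p q v : 0 < p -> 0 <= q -> 0 <= v ->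
  p * (q * v / p * ln (q * v / p)) = q * v * ln (q / p) + q * (v * ln v).
Proof.
move=> p0 q0 v0.
have [->|qn0] := eqVneq q 0; first by rewrite !(mul0r, mulr0, add0r).
have [->|vn0] := eqVneq v 0; first by rewrite !(mulr0, mul0r) addr0.
have qp : 0 < q / p by rewrite divr_gt0 // lt_def qn0.
have vp : 0 < v by rewrite lt_def vn0.
have -> : q * v / p = q / p * v by rewrite mulrAC.
by rewrite lnM ?posrE //; field; rewrite gt_eqF.
Qed.

End LogInequalities.

Section MMDP.
Variables (R : realType) (N : nat) (O L A : 'I_N -> finType).
Variable P : forall i : 'I_N, (O i * L i)%type -> A i -> (O i * L i)%type -> R.
Hypothesis HP0 : forall i s a s', 0 <= P i s a s'.
Hypothesis HP1 : forall i s a, \sum_(s' : (O i * L i)%type) P i s a s' = 1.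

Local Notation Tz := (fun j => (O j * L j)%type).

Lemma sum_Pj_forall (s : jS O L) (a : jA A) (b : forall j, pred (Tz j)) :
  \sum_(s' : jS O L) ([forall j, b j (s'.1 j, s'.2 j)])%:R * Pj P s a s'
  = \prod_j \sum_z (b j z)%:R * P j (s.1 j, s.2 j) (a j) z.
Proof.
rewrite -(bigA_distr_dffun_pair (fun j z => (b j z)%:R * P j (s.1 j, s.2 j) (a j) z)).
by apply: eq_bigr => s' _; rewrite -prodr_natr_forall /Pj big_split.
Qed.

Lemma sum_P_Tagged (j : 'I_N) (sj : Tz j) (aj : A j) (y : Tz j) :
  \sum_(z : Tz j) (Tagged Tz z == Tagged Tz y)%:R * P j sj aj z = P j sj aj y.
Proof.
rewrite (bigD1 y) //= eqxx mul1r big1 ?addr0 // => z zy.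
by rewrite eq_Tagged /= (negbTE zy) mul0r.
Qed.

(* Coordinates of a dependent product are compared through [Tagged], which avoids
   transporting [y] along [j = i]. *)
Lemma Pj_marginal_agent i (s : jS O L) (a : jA A) (y : Tz i) :
  \sum_(s' : jS O L | (s'.1 i, s'.2 i) == y) Pj P s a s' = P i (s.1 i, s.2 i) (a i) y.
Proof.
pose b j (z : Tz j) := (j != i) || (Tagged Tz z == Tagged Tz y).
have bE (s' : jS O L) : [forall j, b j (s'.1 j, s'.2 j)] = ((s'.1 i, s'.2 i) == y).
  apply/forallP/idP => [/(_ i)|si j]; first by rewrite /b eqxx eq_Tagged.
  by rewrite /b; case: (eqVneq j i) => //= ->; rewrite eq_Tagged.
transitivity (\sum_(s' : jS O L) ([forall j, b j (s'.1 j, s'.2 j)])%:R * Pj P s a s').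
  rewrite big_mkcond; apply: eq_bigr => s' _.
  by rewrite bE; case: ifP; rewrite ?mul1r ?mul0r.
rewrite sum_Pj_forall (bigD1 i) //= [X in _ * X]big1 => [|j ji].
  by rewrite /b eqxx /= sum_P_Tagged mulr1.
by rewrite /b ji /=; under eq_bigr do rewrite mul1r; exact: HP1.
Qed.

Lemma Pj_marginal_coal (c : {set 'I_N}) (s : jS O L) (a : jA A) (y : (Oc O c * Lc L c)%type) :
  \sum_(s' : jS O L | (([ffun j : cidx c => s'.1 (val j)] : Oc O c),
                        ([ffun j : cidx c => s'.2 (val j)] : Lc L c)) == y) Pj P s a s'
  = \prod_(j : cidx c) P (val j) (s.1 (val j), s.2 (val j)) (a (val j)) (y.1 j, y.2 j).
Proof.
pose b j (z : Tz j) := if insub j is Some jc then Tagged Tz z == Tagged Tz (y.1 jc, y.2 jc)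
                       else true.
have bE (s' : jS O L) : [forall j, b j (s'.1 j, s'.2 j)] =
    ((([ffun j : cidx c => s'.1 (val j)] : Oc O c),
      ([ffun j : cidx c => s'.2 (val j)] : Lc L c)) == y).
  apply/forallP/eqP => [bs'|yE j]; last first.
    by rewrite /b; case: insubP => [jc _ <-|] //=; rewrite eq_Tagged -yE /= !ffunE.
  have Ey jc : (s'.1 (val jc), s'.2 (val jc)) = (y.1 jc, y.2 jc).
    by have := bs' (val jc); rewrite /b valK eq_Tagged => /eqP.
  case: y {b bs'} Ey => y1 y2 Ey.
  by congr pair; apply/ffunP => jc; rewrite ffunE; case: (Ey jc).
transitivity (\sum_(s' : jS O L) ([forall j, b j (s'.1 j, s'.2 j)])%:R * Pj P s a s').
  rewrite big_mkcond; apply: eq_bigr => s' _.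
  by rewrite bE; case: ifP; rewrite ?mul1r ?mul0r.
rewrite sum_Pj_forall (bigID (mem c)) /= [X in _ * X]big1 ?mulr1 => [|j jc]; last first.
  by rewrite /b insubN //=; under eq_bigr do rewrite mul1r; exact: HP1.
rewrite big_sub; apply: eq_bigr => jc _.
by rewrite /b valK sum_P_Tagged.
Qed.

Variables (sinit : jS O L) (pi_act : jS O L -> jA A -> R) (T : {set jS O L}).
Hypothesis Ha0 : forall s a, 0 <= pi_act s a.
Hypothesis Ha1 : forall s, \sum_(a : jA A) pi_act s a = 1.
Hypothesis Hfin : forall s a, s \notin T -> (occ P sinit pi_act T s a < +oo)%E.

Local Notation mu := (mu P sinit pi_act T).

Lemma Pj_ge0 s a s' : 0 <= Pj P s a s'.
Proof. by apply: prodr_ge0 => i _; exact: HP0. Qed.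

Lemma mu_ge0 k s : 0 <= mu k s.
Proof.
elim: k s => [|k IH] s /=; first by rewrite ler0n.
by do 2 apply: sumr_ge0 => ? _; rewrite !mulr_ge0 ?Pj_ge0.
Qed.

Lemma occ_ge0 s a : (0 <= occ P sinit pi_act T s a)%E.
Proof. by apply: nneseries_ge0 => k _ _; rewrite lee_fin !mulr_ge0 ?mu_ge0. Qed.

Lemma sum_mu_le_occr n s a : s \notin T ->
  \sum_(k < n) mu k s * pi_act s a <= occr P sinit pi_act T s a.
Proof.
move=> sT; have occ_fin : occ P sinit pi_act T s a \is a fin_num.
  by rewrite ge0_fin_numE ?occ_ge0 ?Hfin.
rewrite -lee_fin /occr fineK //; apply: le_trans (nneseries_lim_ge n _); last first.
  by move=> k _ _; rewrite lee_fin !mulr_ge0 ?mu_ge0.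
by rewrite sumEFin lee_fin big_mkord sT; apply: ler_sum => k _; rewrite mul1r.
Qed.

Section ObservedProcess.
Variables (X Ac Y : finType) (f : jS O L -> X) (h : jA A -> Ac) (g : jS O L -> Y).
Variables (w : X -> R) (PX : X -> Ac -> Y -> R).
Hypothesis Hw0 : forall x, 0 <= w x.
Hypothesis HPX0 : forall x ac y, 0 <= PX x ac y.
Hypothesis HPX1 : forall x ac, \sum_y PX x ac y = 1.
Hypothesis Hmarg : forall s a y, \sum_(s' | g s' == y) Pj P s a s' = PX (f s) (h a) y.

Local Notation probX := (probX P sinit pi_act T f).
Local Notation probXY := (probXY P sinit pi_act T f (fun a s' => (h a, g s'))).
Local Notation Hcond := (Hcond P sinit pi_act T f (fun a s' => (h a, g s'))).
Local Notation numarg := (numarg P sinit pi_act T f h).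

(* [probXAc k x ac] is P(X_k = x, h(A_(k+1)) = ac, E_k); by [Hmarg] it is all
   that [probXY] depends on besides the kernel [PX]. *)
Definition probXAc k x ac :=
  \sum_(s | (s \notin T) && (f s == x)) \sum_(a | h a == ac) mu k s * pi_act s a.

Definition HPX x ac := - \sum_y PX x ac y * ln (PX x ac y).

Lemma probXAc_ge0 k x ac : 0 <= probXAc k x ac.
Proof. by do 2 apply: sumr_ge0 => ? _; rewrite mulr_ge0 ?mu_ge0. Qed.

Lemma probX_sum k x : probX k x = \sum_ac probXAc k x ac.
Proof.
rewrite /probXAc exchange_big /=; apply: eq_bigr => s _.
by rewrite -[LHS]mulr1 -(Ha1 s) mulr_sumr (partition_big h predT).
Qed.

Lemma probXAc_le_probX k x ac : probXAc k x ac <= probX k x.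
Proof. by rewrite probX_sum; apply: ler_sum_term => ?; exact: probXAc_ge0. Qed.

Lemma probXY_factor k x ac y : probXY k x (ac, y) = probXAc k x ac * PX x ac y.
Proof.
rewrite /probXY /probXAc mulr_suml [RHS]big_mkcond /=; apply: eq_bigr => s _.
rewrite mulr_suml [in RHS]big_mkcond /=.
have [sT|sT] /= := boolP (s \in T).
  by do 2 apply: big1 => ? _; rewrite /step sT !mul0r mulr0.
have [fsx|_] /= := eqVneq (f s) x; last by do 2 apply: big1 => ? _; rewrite !mul0r.
apply: eq_bigr => a _; have [hac|hac] /= := eqVneq (h a) ac; last first.
  by apply: big1 => s' _; rewrite xpair_eqE (negbTE hac) mulr0 mul0r.
rewrite -fsx -hac -Hmarg mulr_sumr [RHS]big_mkcond /=; apply: eq_bigr => s' _.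
rewrite xpair_eqE eqxx /step sT /=.
by case: (g s' == y); rewrite ?mul1r ?mulr1 ?mulr0 ?mul0r.
Qed.

Lemma HPX_ge0 x ac : 0 <= HPX x ac.
Proof.
rewrite oppr_ge0; apply: sumr_le0 => y _; apply: mulr_ge0_le0 => //; apply: ln_le0.
by rewrite -(HPX1 x ac); apply: ler_sum_term.
Qed.

Lemma probXAc_mul_ln_le0 k x ac : probXAc k x ac * ln (probXAc k x ac / probX k x) <= 0.
Proof.
apply: mulr_ge0_le0; first exact: probXAc_ge0.
apply: ln_le0; have [->|pn0] := eqVneq (probX k x) 0; first by rewrite invr0 mulr0.
have pp : 0 < probX k x by rewrite lt_def pn0 (le_trans (probXAc_ge0 k x ac)) ?probXAc_le_probX.
by rewrite ler_pdivrMr // mul1r probXAc_le_probX.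
Qed.

Lemma probX_mul_HcondE k x :
  probX k x * Hcond k x =
  - \sum_ac probXAc k x ac * ln (probXAc k x ac / probX k x)
  + \sum_ac probXAc k x ac * HPX x ac.
Proof.
set p := probX k x; have [p0|pn0] := eqVneq p 0.
  have Q0 ac : probXAc k x ac = 0.
    by move: p0; rewrite /p probX_sum => /psumr_eq0P -> // ? _; exact: probXAc_ge0.
  by rewrite p0 mul0r !big1 ?oppr0 ?addr0 // => ac _; rewrite Q0 mul0r.
have pp : 0 < p by rewrite lt_def pn0 /p probX_sum sumr_ge0 // => ? _; exact: probXAc_ge0.
rewrite /Hcond mulrN addrC -opprB -sumrB; congr (- _).
transitivity (\sum_ac \sum_y p * (qcond P sinit pi_act T f (fun a s' => (h a, g s')) k x (ac, y)
   * ln (qcond P sinit pi_act T f (fun a s' => (h a, g s')) k x (ac, y)))).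
  by rewrite mulr_sumr pair_bigA /=; apply: eq_bigr => -[ac y] _.
apply: eq_bigr => ac _; rewrite /qcond -/p.
under eq_bigr do rewrite probXY_factor mul_ln_chain ?probXAc_ge0 //.
rewrite big_split /= -mulr_sumr /HPX mulrN opprK; congr (_ + _).
by under eq_bigr do rewrite mulrAC; rewrite -mulr_sumr HPX1 mulr1.
Qed.

Lemma probX_mul_Hcond_ge0 k x : 0 <= probX k x * Hcond k x.
Proof.
rewrite probX_mul_HcondE addr_ge0 //.
  by rewrite oppr_ge0 sumr_le0 // => ac _; exact: probXAc_mul_ln_le0.
by rewrite sumr_ge0 // => ac _; rewrite mulr_ge0 ?probXAc_ge0 ?HPX_ge0.
Qed.

Lemma sum_probXAc_le_numarg n x ac : \sum_(k < n) probXAc k x ac <= numarg x ac.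
Proof.
rewrite /probXAc /numarg exchange_big /=; apply: ler_sum => s /andP[sT _].
by rewrite exchange_big /=; apply: ler_sum => a _; exact: sum_mu_le_occr.
Qed.

Lemma numarg_ln_le n x ac :
  numarg x ac * ln (numarg x ac / \sum_b numarg x b)
  <= \sum_(k < n) probXAc k x ac * ln (probXAc k x ac / probX k x).
Proof.
have sum_probX : \sum_(k < n) probX k x = \sum_b \sum_(k < n) probXAc k x b.
  by rewrite [RHS]exchange_big; apply: eq_bigr => k _; exact: probX_sum.
(* the remainders are the occupancy mass collected after time [n] *)
have := @log_sum_le_rem _ n (fun k => probXAc k x ac) (fun k => probX k x)
  (numarg x ac - \sum_(k < n) probXAc k x ac)
  (\sum_b numarg x b - \sum_(k < n) probX k x).
rewrite !subrKC; apply=> [k|]; first by rewrite probXAc_ge0 probXAc_le_probX.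
rewrite subr_ge0 sum_probXAc_le_numarg sum_probX -sumrB /=.
apply: (@ler_sum_term _ _ (fun b => numarg x b - \sum_(k < n) probXAc k x b)) => b.
by rewrite subr_ge0 sum_probXAc_le_numarg.
Qed.

Lemma sum_probX_mul_Hcond_le n x :
  \sum_(k < n) probX k x * Hcond k x
  <= - \sum_ac numarg x ac * ln (numarg x ac / \sum_b numarg x b)
     + \sum_ac numarg x ac * HPX x ac.
Proof.
under eq_bigr do rewrite probX_mul_HcondE.
rewrite big_split /= sumrN exchange_big [X in _ + X]exchange_big /=.
apply: lerD; first by rewrite lerN2; apply: ler_sum => ac _; exact: numarg_ln_le.
apply: ler_sum => ac _; rewrite -mulr_suml.
by rewrite ler_wpM2r ?HPX_ge0 ?sum_probXAc_le_numarg.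
Qed.

Lemma GbarE : Gbar P sinit pi_act T f w h PX =
  \sum_x w x * (- \sum_ac numarg x ac * ln (numarg x ac / \sum_b numarg x b)
                 + \sum_ac numarg x ac * HPX x ac).
Proof.
rewrite /Gbar -!sumrN -big_split /=; apply: eq_bigr => x _.
rewrite mulrDr mulrN !mulr_sumr -!sumrN -!big_split /=.
apply: eq_bigr => ac _; rewrite /HPX.
rewrite (eq_bigr (fun y => numarg x ac * w x * (PX x ac y * ln (PX x ac y)))) => [|y _].
  by rewrite -mulr_sumr; ring.
by rewrite mulrA.
Qed.

Lemma Gent_le_Gbar :
  (Gent P sinit pi_act T f (fun a s' => (h a, g s')) w
   <= (Gbar P sinit pi_act T f w h PX)%:E)%E.
Proof.
have term_ge0 k : 0 <= \sum_x w x * probX k x * Hcond k x.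
  by apply: sumr_ge0 => x _; rewrite -mulrA mulr_ge0 ?probX_mul_Hcond_ge0.
apply: lime_le; first by apply: is_cvg_nneseries => k _ _; rewrite lee_fin.
apply: nearW => n; rewrite sumEFin lee_fin big_mkord exchange_big GbarE /=.
apply: ler_sum => x _; under eq_bigr do rewrite -mulrA.
by rewrite -mulr_sumr ler_wpM2l ?sum_probX_mul_Hcond_le.
Qed.

End ObservedProcess.

Variables (K : nat) (pi_comm : jO O -> {set 'I_N} -> R).
Hypothesis Hc0 : forall o c, 0 <= pi_comm o c.

Lemma G_agent_le i :
  (G_agent P sinit pi_act T K pi_comm i <= (Gbar_agent P sinit pi_act T K pi_comm i)%:E)%E.
Proof.
apply: (@Gent_le_Gbar _ _ _ (fi i) (hi (A:=A) i) (fun s' : jS O L => (s'.1 i, s'.2 i))).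
- by move=> x; apply: sumr_ge0 => c _.
- by move=> x ac y; exact: HP0.
- by move=> x ac; exact: HP1.
- by move=> s a y; exact: Pj_marginal_agent.
Qed.

Lemma G_coal_le c :
  (G_coal P sinit pi_act T pi_comm c <= (Gbar_coal P sinit pi_act T pi_comm c)%:E)%E.
Proof.
apply: (@Gent_le_Gbar _ _ _ (@fc _ O L c) (@hc _ A c) (fun s' : jS O L =>
  (([ffun j : cidx c => s'.1 (val j)] : Oc O c), ([ffun j : cidx c => s'.2 (val j)] : Lc L c)))).
- by move=> x; exact: Hc0.
- by move=> x ac y; apply: prodr_ge0 => j _; exact: HP0.
- move=> x ac; rewrite /PXc (bigA_distr_dffun_pair (fun j z => P (val j) (x.1 (val j), x.2 j) (ac j) z)).
  by apply: big1 => j _; exact: HP1.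
- move=> s a y; rewrite Pj_marginal_coal //; apply: eq_bigr => j _.
  by rewrite /fc /hc /= !ffunE.
Qed.

End MMDP.

Theorem proposition2 (R : realType) (N : nat) (HN : (0 < N)%N)
  (O L A : 'I_N -> finType)
  (P : forall i : 'I_N, (O i * L i)%type -> A i -> (O i * L i)%type -> R)
  (HP0 : forall i s a s', 0 <= P i s a s')
  (HP1 : forall i s a, \sum_(s' : (O i * L i)%type) P i s a s' = 1)
  (sinit : jS O L) (K : nat) (HK : (K <= N)%N)
  (pi_comm : jO O -> {set 'I_N} -> R)
  (Hc0 : forall o c, 0 <= pi_comm o c)
  (Hc1 : forall o, \sum_(c : {set 'I_N} | #|c| == K) pi_comm o c = 1)
  (pi_act : jS O L -> jA A -> R)
  (Ha0 : forall s a, 0 <= pi_act s a)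
  (Ha1 : forall s, \sum_(a : jA A) pi_act s a = 1)
  (Starget Savoid : {set jS O L})
  (Hdisj : [disjoint Starget & Savoid])
  (Hfin : forall (s : jS O L) (a : jA A), s \notin Starget :|: Savoid ->
      (occ P sinit pi_act (Starget :|: Savoid) s a < +oo)%E) :
  (forall i : 'I_N,
     (G_agent P sinit pi_act (Starget :|: Savoid) K pi_comm i
      <= (Gbar_agent P sinit pi_act (Starget :|: Savoid) K pi_comm i)%:E)%E)
  /\
  (forall c : {set 'I_N}, #|c| = K ->
     (G_coal P sinit pi_act (Starget :|: Savoid) pi_comm c
      <= (Gbar_coal P sinit pi_act (Starget :|: Savoid) pi_comm c)%:E)%E).
Proof.
split=> [i|c _]; first exact: G_agent_le.
exact: G_coal_le.
Qed.
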